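(* Let $T$ be a reducing triangulation of an oriented surface without boundary; the surface may be compact or a covering space of a compact one, in which case $T$ is the lift of a reducing triangulation. Any two reduced walks in $T$ that are homotopic (as paths with fixed endpoints) are equal.
   Context: A triangulation is an embedded graph whose faces are all open disks bounded by three edge-sides. A reducing triangulation $T$ of an oriented surface without boundary is a triangulation in which every vertex has degree at least $8$ and each triangle is colored red or blue so that adjacent triangles have different colors. It may be infinite, for instance when lifted to a covering space together with its colors. Suppose a walk traverses a directed edge $e$ into a vertex $v$ and then leaves $v$ along a directed edge $e'$. This occurrence of $v$ makes a $k$-turn ($k\ge 0$) if exactly $k$ triangles around $v$ lie to the left of the length-two walk $e\,e'$, between $e$ and $e'$ in the cyclic order around $v$. It makes a $-k$-turn ($k\ge 1$) if exactly $k$ triangles lie to its right. A turn is named by an integer in $\{-3,\dots,3\}$ when possible, which is unambiguous since degrees are at least $8$; otherwise it is named by the positive integer. A $k_b$-turn (resp. $k_r$-turn) is a $k$-turn in which the triangle to the left of $e$ is blue (resp. red). A bad turn is a $0$-turn, a $1$-turn, a $-1$-turn, a $2_r$-turn or a $-2_r$-turn. A walk $(v_0,e_0,v_1,\dots,e_{k-1},v_k)$ is reduced if none of its interior vertices $v_1,\dots,v_{k-1}$ makes a bad turn. A walk of length $0$ or $1$ is trivially reduced. *)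

(* Combinatorial (dart / rotation-system) model of a
   triangulation of an oriented surface without boundary. *)
From Stdlib Require Import List Arith Relations.
Import ListNotations.

(* A map: darts D (directed edges), vertices V.
   rev d      : the reverse dart of d.
   sigma d    : the next dart counterclockwise around the vertex tail d.
   sigma_inv  : its inverse.
   tail d     : the vertex dart d leaves from.
   red d      : colour of the triangle lying to the LEFT of dart d
                (true = red, false = blue). *)
Record surf_map := Map {
  D : Type;
  V : Type;
  rev : D -> D;
  sigma : D -> D;
  sigma_inv : D -> D;
  tail : D -> V;
  red : D -> bool
}.

Arguments rev {s} _.
Arguments sigma {s} _.
Arguments sigma_inv {s} _.
Arguments tail {s} _.
Arguments red {s} _.

Definition head {M : surf_map} (d : D M) : V M := tail (rev d).

(* face permutation: phi d is the dart following d along the boundary of the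
   triangle lying to the left of d *)
Definition phi {M : surf_map} (d : D M) : D M := sigma_inv (rev d).

Definition degree (M : surf_map) (x : D M) (n : nat) : Prop :=
  0 < n /\ Nat.iter n (@sigma M) x = x /\
  (forall m, 0 < m < n -> Nat.iter m (@sigma M) x <> x).

Definition reducing_triangulation (M : surf_map) : Prop :=
  (forall d : D M, rev (rev d) = d) /\
  (forall d : D M, rev d <> d) /\
  (forall d : D M, sigma (sigma_inv d) = d) /\
  (forall d : D M, sigma_inv (sigma d) = d) /\
  (forall v : V M, exists d : D M, tail d = v) /\
  (forall d d' : D M, tail d = tail d' <-> exists k, Nat.iter k (@sigma M) d = d') /\
  (forall d : D M, exists n, degree M d n /\ 8 <= n) /\
  (forall d : D M, Nat.iter 3 (@phi M) d = d /\ phi d <> d) /\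
  (forall d : D M, red (phi d) = red d) /\
  (forall d : D M, red (rev d) <> red d).

Definition finite_map (M : surf_map) : Prop :=
  exists l : list (D M), forall d, In d l.

Definition covering (M M' : surf_map) (f : D M -> D M') : Prop :=
  (forall d, f (rev d) = rev (f d)) /\
  (forall d, f (sigma d) = sigma (f d)) /\
  (forall d, red (f d) = red d) /\
  (forall d n, degree M d n -> degree M' (f d) n) /\
  (forall d', exists d, f d = d').

Definition compact_or_lift (M : surf_map) : Prop :=
  finite_map M \/
  exists (M' : surf_map) (f : D M -> D M'),
    reducing_triangulation M' /\ finite_map M' /\ covering M M' f.

Fixpoint is_walk (M : surf_map) (v : V M) (ds : list (D M)) : Prop :=
  match ds with
  | [] => True
  | d :: ds' => tail d = v /\ is_walk M (head d) ds'
  end.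

Definition walk (M : surf_map) : Type := (V M * list (D M))%type.

Inductive elem_move (M : surf_map) : walk M -> walk M -> Prop :=
  | move_spur : forall v l1 l2 d,
      is_walk M v (l1 ++ d :: rev d :: l2) -> is_walk M v (l1 ++ l2) ->
      elem_move M (v, l1 ++ d :: rev d :: l2) (v, l1 ++ l2)
  | move_face : forall v l1 l2 d,
      is_walk M v (l1 ++ l2) ->
      is_walk M v (l1 ++ d :: phi d :: phi (phi d) :: l2) ->
      elem_move M (v, l1 ++ l2) (v, l1 ++ d :: phi d :: phi (phi d) :: l2).

Definition homotopic (M : surf_map) : walk M -> walk M -> Prop :=
  clos_refl_sym_trans (walk M) (elem_move M).

(* turns: walk e e' through v = head e = tail e'.  The number of triangles
   to the left of e e' is the k with sigma^k e' = rev e, 0 <= k < deg v. *)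
Definition bad_turn (M : surf_map) (e e' : D M) : Prop :=
  exists k n, degree M e' n /\ k < n /\ Nat.iter k (@sigma M) e' = rev e /\
    (k = 0 \/ k = 1 \/ k = n - 1 \/
     (k = 2 /\ red e = true) \/ (k = n - 2 /\ red e = true)).

Fixpoint reduced (M : surf_map) (ds : list (D M)) : Prop :=
  match ds with
  | e :: ((e' :: _) as rest) => ~ bad_turn M e e' /\ reduced M rest
  | _ => True
  end.

(* A walk is put in normal form by reading it dart by dart while keeping a reduced walk: each
   new dart is appended, and the bad turn it may create is repaired by a local homotopy (a spur
   cancels; a [±1]- or [±2_r]-turn is rerouted along the other sides of the triangles it
   encloses). Degree at least 8 and the proper colouring ensure that a repair disturbs at most
   the dart below it, so the result is again reduced. Inserting a spur or the boundary of a
   triangle anywhere in a walk does not change its normal form; this is proved by induction on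
   the reduced prefix, using the mirror image of the triangulation to turn right turns into left
   turns. A reduced walk is its own normal form, so homotopic reduced walks coincide. *)

From Stdlib Require Import Arith Lia Bool ClassicalEpsilon.
From Stdlib Require List.
Import List.ListNotations.
Open Scope list_scope.

Notation sigma_iter k := (Nat.iter k sigma).

Definition deg {M : surf_map} (x : D M) : nat :=
  epsilon (inhabits 0) (fun n => degree M x n).

(** * Rotations and degrees *)

Section Rotation.
Context {M : surf_map} (HT : reducing_triangulation M).
Implicit Types (d x y : D M).

Lemma rev_rev d : rev (rev d) = d.
Proof. apply HT. Qed.

Lemma sigma_sigma_inv d : sigma (sigma_inv d) = d.
Proof. apply HT. Qed.

Lemma sigma_inv_sigma d : sigma_inv (sigma d) = d.
Proof. apply HT. Qed.

Lemma same_tail_iter x y : tail x = tail y <-> exists k, sigma_iter k x = y.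
Proof. apply HT. Qed.

Lemma degree_ge8 x : exists n, degree M x n /\ 8 <= n.
Proof. apply HT. Qed.

Lemma phi3 d : phi (phi (phi d)) = d.
Proof. apply HT. Qed.

Lemma phi_neq d : phi d <> d.
Proof. apply HT. Qed.

Lemma red_phi d : red (phi d) = red d.
Proof. apply HT. Qed.

Lemma red_rev d : red (rev d) = negb (red d).
Proof.
  destruct HT as (_&_&_&_&_&_&_&_&_&H). specialize (H d).
  destruct (red (rev d)), (red d); easy.
Qed.

Lemma sigma_inj x y : sigma x = sigma y -> x = y.
Proof. intro E. now rewrite <- (sigma_inv_sigma x), E, sigma_inv_sigma. Qed.

Lemma sigma_phi d : sigma (phi d) = rev d.
Proof. apply sigma_sigma_inv. Qed.

Lemma rev_sigma d : rev (sigma d) = phi (phi d).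
Proof.
  rewrite <- (phi3 d) at 1. unfold phi at 1.
  now rewrite sigma_sigma_inv, rev_rev.
Qed.

Lemma rev_phi_phi d : rev (phi (phi d)) = sigma d.
Proof. now rewrite <- rev_sigma, rev_rev. Qed.

Lemma rev_sigma_rev d : rev (sigma (rev d)) = phi (sigma_inv d).
Proof.
  rewrite <- (sigma_sigma_inv d) at 1. rewrite rev_sigma.
  unfold phi at 3. now rewrite rev_sigma, phi3.
Qed.

Lemma sigma_rev_sigma d : sigma (rev (sigma d)) = rev (phi d).
Proof. now rewrite rev_sigma, sigma_phi. Qed.

Lemma red_sigma d : red (sigma d) = negb (red d).
Proof. rewrite <- (rev_rev (sigma d)), red_rev, rev_sigma, !red_phi. now destruct (red d). Qed.

Lemma red_sigma_inv d : red (sigma_inv d) = negb (red d).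
Proof.
  rewrite <- (sigma_sigma_inv d) at 2. rewrite red_sigma.
  now destruct (red (sigma_inv d)).
Qed.

Lemma tail_sigma d : tail (sigma d) = tail d.
Proof. symmetry. apply same_tail_iter. now exists 1. Qed.

Lemma tail_sigma_inv d : tail (sigma_inv d) = tail d.
Proof. now rewrite <- tail_sigma, sigma_sigma_inv. Qed.

Lemma tail_phi d : tail (phi d) = head d.
Proof. apply tail_sigma_inv. Qed.

Lemma head_sigma d : head (sigma d) = head (phi d).
Proof. unfold head. now rewrite rev_sigma, tail_phi. Qed.

Lemma tail_iter k d : tail (sigma_iter k d) = tail d.
Proof. induction k as [|k IH]; [easy|]. now rewrite Nat.iter_succ, tail_sigma. Qed.

Lemma red_iter k d : red (sigma_iter k d) = xorb (Nat.odd k) (red d).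
Proof.
  induction k as [|k IH]; [simpl; now destruct (red d)|].
  rewrite Nat.iter_succ, red_sigma, IH, Nat.odd_succ, <- Nat.negb_odd.
  now destruct (Nat.odd k), (red d).
Qed.

Lemma iter_inj k x y : sigma_iter k x = sigma_iter k y -> x = y.
Proof.
  induction k as [|k IH]; [easy|].
  rewrite !Nat.iter_succ. intro E. now apply IH, sigma_inj.
Qed.

Lemma degree_unique x n n' : degree M x n -> degree M x n' -> n = n'.
Proof.
  intros (? & Hn & Hmin) (? & Hn' & Hmin').
  destruct (Nat.lt_trichotomy n n') as [?|[?|?]];
    [exfalso; apply (Hmin' n)|..|exfalso; apply (Hmin n')]; auto.
Qed.

Lemma deg_spec x : degree M x (deg x).
Proof.
  destruct (degree_ge8 x) as [n [Hn _]].
  unfold deg. apply epsilon_spec. eauto.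
Qed.

Lemma deg_ge8 x : 8 <= deg x.
Proof.
  destruct (degree_ge8 x) as [n [Hn H8]].
  now rewrite (degree_unique x _ _ (deg_spec x) Hn).
Qed.

Lemma iter_deg x : sigma_iter (deg x) x = x.
Proof. apply deg_spec. Qed.

Lemma iter_mod k x : sigma_iter k x = sigma_iter (k mod deg x) x.
Proof.
  set (r := k mod deg x). rewrite (Nat.div_mod_eq k (deg x)). fold r.
  rewrite Nat.add_comm, Nat.iter_add. f_equal.
  induction (k / deg x) as [|q IH]; [now rewrite Nat.mul_0_r|].
  now rewrite Nat.mul_succ_r, Nat.iter_add, iter_deg.
Qed.

Lemma iter_complement j x : j <= deg x -> sigma_iter (deg x - j) (sigma_iter j x) = x.
Proof. intro. rewrite <- Nat.iter_add, Nat.sub_add by easy. apply iter_deg. Qed.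

Lemma iter_lt_deg_inj x i j :
  i < deg x -> j < deg x -> sigma_iter i x = sigma_iter j x -> i = j.
Proof.
  destruct (deg_spec x) as (_ & _ & Hmin).
  assert (Hshift : forall i j, i < j < deg x -> sigma_iter i x <> sigma_iter j x).
  { intros i' j' H E. apply (Hmin (j' - i')); [lia|].
    apply (iter_inj i'). rewrite <- Nat.iter_add, Nat.add_comm, Nat.sub_add by lia. auto. }
  intros Hi Hj E. destruct (Nat.lt_trichotomy i j) as [?|[?|?]]; auto; exfalso.
  - apply (Hshift i j); auto.
  - apply (Hshift j i); auto.
Qed.

Lemma deg_same_tail x y : tail x = tail y -> deg x = deg y.
Proof.
  intros [k <-]%same_tail_iter. symmetry. apply (degree_unique _ _ _ (deg_spec _)).
  destruct (deg_spec x) as (Hpos & Hx & Hmin). split; [easy|split].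
  - now rewrite <- Nat.iter_add, Nat.add_comm, Nat.iter_add, Hx.
  - intros m Hm E. apply (Hmin m Hm), (iter_inj k).
    now rewrite <- Nat.iter_add, Nat.add_comm, Nat.iter_add.
Qed.

Lemma deg_sigma x : deg (sigma x) = deg x.
Proof. apply deg_same_tail, tail_sigma. Qed.

End Rotation.

(** * Turns *)

(* The number of triangles to the left of the walk [f a]; the number to its right is
   [deg a - turn f a]. *)
Definition turn {M : surf_map} (f a : D M) : nat :=
  epsilon (inhabits 0) (fun k => k < deg a /\ sigma_iter k a = rev f).

Section Turns.
Context {M : surf_map} (HT : reducing_triangulation M).
Implicit Types (a f : D M).

Lemma turn_spec f a : tail a = head f -> turn f a < deg a /\ sigma_iter (turn f a) a = rev f.
Proof.
  intros [k Ek]%(same_tail_iter HT). unfold turn. apply epsilon_spec.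
  exists (k mod deg a). split.
  - apply Nat.mod_upper_bound. pose proof (deg_ge8 HT a). lia.
  - now rewrite <- (iter_mod HT).
Qed.

Lemma turn_of_iter f a k : k < deg a -> sigma_iter k a = rev f -> turn f a = k.
Proof.
  intros Hk E.
  assert (T : tail a = head f) by (unfold head; rewrite <- E; now rewrite (tail_iter HT)).
  destruct (turn_spec f a T) as [Hlt Ht]. apply (iter_lt_deg_inj HT a); congruence.
Qed.

Lemma turn_of_iter_rev f a j : 0 < j < deg a -> sigma_iter j (rev f) = a -> turn f a = deg a - j.
Proof.
  intros Hj E. apply turn_of_iter; [lia|].
  rewrite <- E at 2. rewrite (deg_same_tail HT a (rev f)) by (rewrite <- E; apply (tail_iter HT)).
  apply (iter_complement HT). rewrite <- (deg_same_tail HT a (rev f)); [lia|].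
  rewrite <- E. apply (tail_iter HT).
Qed.

Lemma iter_rev_of_turn f a j :
  tail a = head f -> j <= deg a -> turn f a = deg a - j -> sigma_iter j (rev f) = a.
Proof.
  intros T Hj K. destruct (turn_spec f a T) as [_ E]. rewrite K in E.
  rewrite <- E, <- Nat.iter_add, Nat.add_comm, Nat.sub_add by easy. apply (iter_deg HT).
Qed.

Lemma turn0_rev f a : tail a = head f -> turn f a = 0 -> a = rev f.
Proof. intros T K. destruct (turn_spec f a T) as [_ E]. now rewrite K in E. Qed.

Lemma turn1_phi f a : tail a = head f -> turn f a = 1 -> a = phi f.
Proof.
  intros T K. destruct (turn_spec f a T) as [_ E]. rewrite K in E.
  unfold phi. rewrite <- E. symmetry. apply (sigma_inv_sigma HT).
Qed.

Lemma turn2_phi f a : tail a = head f -> turn f a = 2 -> sigma a = phi f.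
Proof.
  intros T K. destruct (turn_spec f a T) as [_ E]. rewrite K in E.
  unfold phi. rewrite <- E. symmetry. apply (sigma_inv_sigma HT).
Qed.

Lemma turn_last_rev f a : tail a = head f -> turn f a = deg a - 1 -> a = sigma (rev f).
Proof.
  intros T K. symmetry.
  apply (iter_rev_of_turn f a 1 T); [pose proof (deg_ge8 HT a); lia|easy].
Qed.

Lemma turn_last2_rev f a : tail a = head f -> turn f a = deg a - 2 -> a = sigma (sigma (rev f)).
Proof.
  intros T K. symmetry.
  apply (iter_rev_of_turn f a 2 T); [pose proof (deg_ge8 HT a); lia|easy].
Qed.

Lemma turn_rev f : turn f (rev f) = 0.
Proof. apply turn_of_iter; [pose proof (deg_ge8 HT (rev f)); lia|easy]. Qed.

Lemma turn_phi f : turn f (phi f) = 1.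
Proof. apply turn_of_iter; [pose proof (deg_ge8 HT (phi f)); lia|apply (sigma_phi HT)]. Qed.

Lemma turn_sigma f a : tail a = head f -> 0 < turn f a -> turn f (sigma a) = turn f a - 1.
Proof.
  intros T H. destruct (turn_spec f a T) as [Hlt E]. apply turn_of_iter.
  - rewrite (deg_sigma HT). lia.
  - rewrite <- Nat.iter_succ_r. now replace (S (turn f a - 1)) with (turn f a) by lia.
Qed.

Lemma red_turn f a : tail a = head f -> red f = negb (xorb (Nat.odd (turn f a)) (red a)).
Proof.
  intro T. destruct (turn_spec f a T) as [_ E].
  rewrite <- (red_iter HT), E, (red_rev HT). now destruct (red f).
Qed.

Definition bad_turnb f a : bool :=
  let n := deg a in let k := turn f a in
  (k =? 0) || (k =? 1) || (k =? n - 1) || ((k =? 2) && red f) || ((k =? n - 2) && red f).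

Lemma bad_turnb_cases f a : bad_turnb f a = true ->
  turn f a = 0 \/ turn f a = 1 \/ turn f a = deg a - 1 \/
  (turn f a = 2 /\ red f = true) \/ (turn f a = deg a - 2 /\ red f = true).
Proof.
  unfold bad_turnb. intro H.
  repeat rewrite orb_true_iff in H. repeat rewrite andb_true_iff in H.
  repeat rewrite Nat.eqb_eq in H. tauto.
Qed.

Lemma bad_turnb_sound f a : tail a = head f -> bad_turnb f a = true -> bad_turn M f a.
Proof.
  intros T B. destruct (turn_spec f a T) as [Hlt E].
  exists (turn f a), (deg a). split; [apply (deg_spec HT)|]. do 2 (split; [easy|]).
  now apply bad_turnb_cases.
Qed.

Lemma good_turn_intro f a :
  2 <= turn f a <= deg a - 2 -> (turn f a = 2 -> red f = false) ->
  (turn f a = deg a - 2 -> red f = false) -> bad_turnb f a = false.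
Proof.
  intros H H2 Hn2. pose proof (deg_ge8 HT a). unfold bad_turnb.
  destruct (Nat.eqb_spec (turn f a) 0), (Nat.eqb_spec (turn f a) 1),
    (Nat.eqb_spec (turn f a) (deg a - 1)); try lia.
  destruct (Nat.eqb_spec (turn f a) 2) as [E|E], (Nat.eqb_spec (turn f a) (deg a - 2)) as [E'|E'];
    try lia; rewrite ?(H2 E), ?(Hn2 E'); reflexivity.
Qed.

Lemma good_turn_elim f a : tail a = head f -> bad_turnb f a = false ->
  2 <= turn f a <= deg a - 2 /\ (turn f a = 2 -> red f = false) /\
  (turn f a = deg a - 2 -> red f = false).
Proof.
  intros T B. pose proof (deg_ge8 HT a). destruct (turn_spec f a T) as [Hlt _].
  unfold bad_turnb in B.
  destruct (Nat.eqb_spec (turn f a) 0), (Nat.eqb_spec (turn f a) 1),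
    (Nat.eqb_spec (turn f a) (deg a - 1)); try discriminate.
  destruct (Nat.eqb_spec (turn f a) 2), (Nat.eqb_spec (turn f a) (deg a - 2)); try lia;
    simpl in B; rewrite ?andb_false_r, ?orb_false_r in B; repeat split; intros; try lia; easy.
Qed.

End Turns.

(** * Pushing a dart onto a reduced walk *)

Section Push.
Context {M : surf_map} (HT : reducing_triangulation M).
Implicit Types (a f l x : D M) (v : V M) (rs : list (D M)).

(* A reduced walk is stored reversed, last dart first. [push rs a] appends [a] and repairs the
   bad turn this may create: a spur cancels, and a [±1]- or [±2_r]-turn is replaced by the
   homotopic path along the other sides of the triangles it encloses, whose first dart is
   pushed again. *)
Fixpoint push (rs : list (D M)) a : list (D M) :=
  match rs with
  | [] => [a]
  | f :: rs' =>
      let n := deg a in let k := turn f a in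
      if k =? 0 then rs'
      else if k =? 1 then push rs' (sigma f)
      else if k =? n - 1 then push rs' (sigma_inv f)
      else if (k =? 2) && red f then rev (phi a) :: push rs' (sigma f)
      else if (k =? n - 2) && red f then phi (sigma_inv a) :: push rs' (sigma_inv f)
      else a :: f :: rs'
  end.

Fixpoint reduced_stack (v : V M) (rs : list (D M)) : Prop :=
  match rs with
  | [] => True
  | [f] => tail f = v
  | f :: ((f' :: _) as rs') => tail f = head f' /\ bad_turnb f' f = false /\ reduced_stack v rs'
  end.

Definition stack_end (v : V M) (rs : list (D M)) : V M :=
  match rs with [] => v | f :: _ => head f end.

Lemma reduced_stack_cons v f rs :
  reduced_stack v (f :: rs) -> reduced_stack v rs /\ tail f = stack_end v rs.
Proof. destruct rs; simpl; tauto. Qed.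

Lemma reduced_stack_extend v x l rs : reduced_stack v (l :: rs) ->
  tail x = head l -> bad_turnb l x = false -> reduced_stack v (x :: l :: rs).
Proof. intros W T B. exact (conj T (conj B W)). Qed.

Lemma push_turn0 f a rs : turn f a = 0 -> push (f :: rs) a = rs.
Proof. intro K. simpl. now rewrite K. Qed.

Lemma push_turn1 f a rs : turn f a = 1 -> push (f :: rs) a = push rs (sigma f).
Proof. intro K. simpl. now rewrite K. Qed.

Lemma push_turn_last f a rs :
  turn f a = deg a - 1 -> push (f :: rs) a = push rs (sigma_inv f).
Proof.
  intro K. pose proof (deg_ge8 HT a). simpl. rewrite K.
  destruct (Nat.eqb_spec (deg a - 1) 0), (Nat.eqb_spec (deg a - 1) 1); try lia.
  now rewrite Nat.eqb_refl.
Qed.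

Lemma push_turn2_red f a rs : turn f a = 2 -> red f = true ->
  push (f :: rs) a = rev (phi a) :: push rs (sigma f).
Proof.
  intros K R. pose proof (deg_ge8 HT a). simpl. rewrite K, R.
  destruct (Nat.eqb_spec 2 (deg a - 1)); [lia|]. reflexivity.
Qed.

Lemma push_turn_last2_red f a rs : turn f a = deg a - 2 -> red f = true ->
  push (f :: rs) a = phi (sigma_inv a) :: push rs (sigma_inv f).
Proof.
  intros K R. pose proof (deg_ge8 HT a). simpl. rewrite K, R.
  destruct (Nat.eqb_spec (deg a - 2) 0), (Nat.eqb_spec (deg a - 2) 1),
    (Nat.eqb_spec (deg a - 2) (deg a - 1)), (Nat.eqb_spec (deg a - 2) 2); try lia.
  now rewrite Nat.eqb_refl.
Qed.

Lemma push_good f a rs : bad_turnb f a = false -> push (f :: rs) a = a :: f :: rs.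
Proof.
  unfold bad_turnb. intro B. simpl.
  destruct (turn f a =? 0), (turn f a =? 1), (turn f a =? deg a - 1),
    (turn f a =? 2), (turn f a =? deg a - 2), (red f); easy.
Qed.

Lemma push_top v f rs : reduced_stack v (f :: rs) -> push rs f = f :: rs.
Proof. destruct rs as [|f' rs]; [easy|]. intros (_ & B & _). now apply push_good. Qed.

End Push.

(** * The mirror triangulation *)

(* The same triangulation seen from the other side of the surface. It exchanges [k]-turns and
   [-k]-turns, which halves the case analyses below. *)
Definition mirror (M : surf_map) : surf_map :=
  Map (D M) (V M) (@rev M) (@sigma_inv M) (@sigma M) (@tail M) (@red M).

Section Mirror.
Context {M : surf_map} (HT : reducing_triangulation M).
Implicit Types (d x a f : D M) (v : V M) (rs : list (D M)).

Lemma iter_inv_iter k x : Nat.iter k sigma_inv (sigma_iter k x) = x.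
Proof.
  revert x. induction k as [|k IH]; intro x; [easy|].
  now rewrite Nat.iter_succ_r, Nat.iter_succ, (sigma_inv_sigma HT), IH.
Qed.

Lemma iter_iter_inv k x : sigma_iter k (Nat.iter k sigma_inv x) = x.
Proof.
  revert x. induction k as [|k IH]; intro x; [easy|].
  now rewrite Nat.iter_succ_r, Nat.iter_succ, (sigma_sigma_inv HT), IH.
Qed.

Lemma iter_inv_complement j x : j <= deg x -> Nat.iter (deg x - j) sigma_inv x = sigma_iter j x.
Proof.
  intro Hj. transitivity (Nat.iter (deg x - j) sigma_inv (sigma_iter (deg x - j) (sigma_iter j x))).
  - now rewrite (iter_complement HT).
  - apply iter_inv_iter.
Qed.

Lemma degree_mirror x : degree (mirror M) x (deg x).
Proof.
  destruct (deg_spec HT x) as (Hpos & Hx & Hmin). split; [easy|split].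
  - change (Nat.iter (deg x) sigma_inv x = x).
    transitivity (Nat.iter (deg x) sigma_inv (sigma_iter (deg x) x)); [now rewrite Hx|].
    apply iter_inv_iter.
  - intros m Hm E. change (Nat.iter m sigma_inv x = x) in E. apply (Hmin m Hm).
    transitivity (sigma_iter m (Nat.iter m sigma_inv x)); [now rewrite E|]. apply iter_iter_inv.
Qed.

Lemma same_tail_iter_inv x y : tail x = tail y <-> exists k, Nat.iter k sigma_inv x = y.
Proof.
  split.
  - intros [k <-]%(same_tail_iter HT). rewrite (iter_mod HT).
    assert (Hr : k mod deg x < deg x)
      by (apply Nat.mod_upper_bound; pose proof (deg_ge8 HT x); lia).
    exists (deg x - k mod deg x). apply iter_inv_complement. lia.
  - intros [k <-]. now rewrite <- (tail_iter HT k (Nat.iter k sigma_inv x)), iter_iter_inv.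
Qed.

Lemma mirror_phi3 d : sigma (rev (sigma (rev (sigma (rev d))))) = d.
Proof.
  rewrite (rev_sigma HT (rev d)), (sigma_phi HT), (rev_rev HT), (sigma_phi HT).
  apply (rev_rev HT).
Qed.

Lemma mirror_phi_neq d : sigma (rev d) <> d.
Proof.
  intro E. apply (f_equal sigma_inv) in E. rewrite (sigma_inv_sigma HT) in E.
  apply (phi_neq HT (rev d)). unfold phi. now rewrite (rev_rev HT), E.
Qed.

Lemma mirror_reducing : reducing_triangulation (mirror M).
Proof.
  pose proof HT as (Hrr & Hrn & Hss & Hsi & Hv & _ & _ & _ & _ & Hredrev).
  repeat split; simpl; auto.
  - apply same_tail_iter_inv.
  - apply same_tail_iter_inv.
  - intro d. exists (deg d). split; [apply degree_mirror|apply (deg_ge8 HT)].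
  - apply mirror_phi3.
  - apply mirror_phi_neq.
  - intro d. unfold phi. simpl. rewrite (red_sigma HT), (red_rev HT). now destruct (red d).
Qed.
Lemma deg_mirror x : @deg (mirror M) x = deg x.
Proof.
  apply (degree_unique (M := mirror M) x);
    [apply (deg_spec mirror_reducing)|apply degree_mirror].
Qed.

Lemma turn_mirror f a : tail a = head f ->
  @turn (mirror M) f a = if turn f a =? 0 then 0 else deg a - turn f a.
Proof.
  intro T. destruct (turn_spec HT f a T) as [Hlt E]. pose proof (deg_ge8 HT a).
  apply (turn_of_iter mirror_reducing); rewrite ?deg_mirror;
    destruct (Nat.eqb_spec (turn f a) 0) as [Z|Z]; try lia.
  - now rewrite Z in E.
  - change (Nat.iter (deg a - turn f a) sigma_inv a = rev f). rewrite <- E.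
    apply iter_inv_complement. lia.
Qed.

Lemma bad_turnb_mirror f a : tail a = head f -> @bad_turnb (mirror M) f a = bad_turnb f a.
Proof.
  intro T. unfold bad_turnb. rewrite (turn_mirror f a T), deg_mirror. simpl red.
  destruct (turn_spec HT f a T) as [Hlt _]. pose proof (deg_ge8 HT a).
  destruct (Nat.eqb_spec (turn f a) 0); [easy|].
  destruct (Nat.eqb_spec (turn f a) 1), (Nat.eqb_spec (turn f a) 2),
    (Nat.eqb_spec (turn f a) (deg a - 1)), (Nat.eqb_spec (turn f a) (deg a - 2)),
    (Nat.eqb_spec (deg a - turn f a) 0), (Nat.eqb_spec (deg a - turn f a) 1),
    (Nat.eqb_spec (deg a - turn f a) 2), (Nat.eqb_spec (deg a - turn f a) (deg a - 1)),
    (Nat.eqb_spec (deg a - turn f a) (deg a - 2)); try lia; now destruct (red f).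
Qed.

Lemma push_mirror v rs a :
  reduced_stack v rs -> tail a = stack_end v rs -> @push (mirror M) rs a = push rs a.
Proof.
  pose proof mirror_reducing as HTm.
  revert a. induction rs as [|f rs IH]; intros a W T; [reflexivity|].
  destruct (reduced_stack_cons v f rs W) as [W' T']. simpl in T.
  assert (Km := turn_mirror f a T). pose proof (deg_ge8 HT a).
  destruct (bad_turnb f a) eqn:B.
  - apply bad_turnb_cases in B as [K|[K|[K|[[K R]|[K R]]]]]; rewrite K in Km.
    + rewrite (push_turn0 f a rs K). now apply (push_turn0 (M := mirror M)).
    + rewrite (push_turn1 f a rs K), (push_turn_last HTm) by (rewrite deg_mirror; exact Km).
      apply IH; [easy|]. now rewrite (tail_sigma HT).
    + rewrite (push_turn_last HT f a rs K), (push_turn1 (M := mirror M))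
        by (rewrite Km; destruct (Nat.eqb_spec (deg a - 1) 0); lia).
      apply IH; [easy|]. now rewrite (tail_sigma_inv HT).
    + rewrite (push_turn2_red HT f a rs K R), (push_turn_last2_red HTm)
        by (rewrite ?deg_mirror; easy).
      change (sigma (rev (sigma a)) :: push (M := mirror M) rs (sigma f)
        = rev (phi a) :: push rs (sigma f)).
      rewrite (sigma_rev_sigma HT). f_equal.
      apply IH; [easy|]. now rewrite (tail_sigma HT).
    + rewrite (push_turn_last2_red HT f a rs K R), (push_turn2_red (M := mirror M))
        by (rewrite ?Km; try destruct (Nat.eqb_spec (deg a - 2) 0); easy || lia).
      change (rev (sigma (rev a)) :: push (M := mirror M) rs (sigma_inv f)
        = phi (sigma_inv a) :: push rs (sigma_inv f)).
      rewrite (rev_sigma_rev HT). f_equal.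
      apply IH; [easy|]. now rewrite (tail_sigma_inv HT).
  - rewrite (push_good f a rs B). apply (push_good (M := mirror M)).
    now rewrite (bad_turnb_mirror f a T).
Qed.

Lemma reduced_stack_mirror v rs : @reduced_stack (mirror M) v rs <-> reduced_stack v rs.
Proof.
  induction rs as [|f [|f' rs] IH]; [easy|easy|].
  simpl. simpl in IH. split; intros (T & B & W); repeat split; try tauto.
  - now rewrite <- (bad_turnb_mirror f' f T).
  - now rewrite (bad_turnb_mirror f' f T).
Qed.

End Mirror.

(** * Pushing preserves reduced walks *)

Section PushTop.
Context {M : surf_map} (HT : reducing_triangulation M).
Implicit Types (d x a f l : D M) (v : V M) (rs : list (D M)).

Lemma push_end v rs a :
  reduced_stack v rs -> tail a = stack_end v rs -> stack_end v (push rs a) = head a.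
Proof.
  revert a. induction rs as [|f rs IH]; intros a W T; [easy|].
  destruct (reduced_stack_cons v f rs W) as [W' T']. simpl in T.
  destruct (bad_turnb f a) eqn:B; [|now rewrite (push_good f a rs B)].
  apply bad_turnb_cases in B as [K|[K|[K|[[K R]|[K R]]]]].
  - rewrite (push_turn0 f a rs K), (turn0_rev HT f a T K). unfold head. now rewrite (rev_rev HT).
  - rewrite (push_turn1 f a rs K), IH, (turn1_phi HT f a T K) by (rewrite ?(tail_sigma HT); easy).
    apply (head_sigma HT).
  - rewrite (push_turn_last HT f a rs K), IH, (turn_last_rev HT f a T K)
      by (rewrite ?(tail_sigma_inv HT); easy).
    rewrite (head_sigma HT). unfold phi at 1. now rewrite (rev_rev HT).
  - rewrite (push_turn2_red HT f a rs K R). simpl. unfold head at 1. rewrite (rev_rev HT).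
    apply (tail_phi HT).
  - rewrite (push_turn_last2_red HT f a rs K R). simpl.
    rewrite <- (tail_phi HT), <- (rev_sigma HT), (sigma_sigma_inv HT). reflexivity.
Qed.

Lemma push_sigma_of_blue v f rs :
  reduced_stack v (f :: rs) -> red f = false -> push rs (sigma f) = sigma f :: rs.
Proof.
  destruct rs as [|f' rs]; [easy|]. intros (T & B & _) Rf.
  destruct (good_turn_elim HT f' f T B) as (Hk & H2 & _).
  pose proof (red_turn HT f' f T) as Rt. rewrite Rf in Rt.
  assert (K2 : turn f' f <> 2)
    by (intro E; specialize (H2 E); rewrite E in Rt; simpl in Rt; congruence).
  apply push_good, (good_turn_intro HT); rewrite (turn_sigma HT), ?(deg_sigma HT) by (easy || lia);
    intros; [lia| |lia].
  now replace (turn f' f) with 3 in Rt by lia.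
Qed.

(* Since the stack below [f] is reduced, re-pushing [sigma f] causes at most one more repair,
   which leaves on top a dart one rotation away from [sigma f]. *)
Lemma push_sigma_top v f rs : reduced_stack v (f :: rs) ->
  exists l r, push rs (sigma f) = l :: r /\ (l = sigma f \/ rev l = phi (sigma f)).
Proof.
  intro W. destruct (red f) eqn:Rf; [|rewrite (push_sigma_of_blue v f rs W Rf); eauto].
  destruct rs as [|f' rs]; [simpl; eauto|]. destruct W as (T & B & W').
  destruct (good_turn_elim HT f' f T B) as (Hk & H2 & _).
  pose proof (red_turn HT f' f T) as Rt. rewrite Rf in Rt.
  assert (Ts : turn f' (sigma f) = turn f' f - 1) by (apply (turn_sigma HT); [easy|lia]).
  destruct (Nat.eqb_spec (turn f' f) 2) as [E2|E2].
  { rewrite (push_turn1 f' (sigma f) rs) by lia.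
    rewrite (push_sigma_of_blue v f' rs W') by auto. do 2 eexists. split; [reflexivity|right].
    now rewrite (rev_sigma HT), <- (turn2_phi HT f' f T E2). }
  destruct (Nat.eqb_spec (turn f' f) 3) as [E3|E3]; [destruct (red f') eqn:Rf'|].
  - rewrite (push_turn2_red HT f' (sigma f) rs) by (easy || lia).
    do 2 eexists. split; [reflexivity|right]. apply (rev_rev HT).
  - rewrite push_good; eauto. apply (good_turn_intro HT); rewrite Ts, ?(deg_sigma HT); lia || easy.
  - rewrite push_good; eauto. apply (good_turn_intro HT); rewrite Ts, ?(deg_sigma HT); lia.
Qed.
End PushTop.

Section PushReduced.
Context {M : surf_map} (HT : reducing_triangulation M).
Implicit Types (d x a f l : D M) (v : V M) (rs : list (D M)).

Lemma push_sigma_inv_of_blue v f rs :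
  reduced_stack v (f :: rs) -> red f = false -> push rs (sigma_inv f) = sigma_inv f :: rs.
Proof.
  intros W R. destruct (reduced_stack_cons v f rs W) as [W' T'].
  rewrite <- (push_mirror HT v) by (rewrite ?(tail_sigma_inv HT); easy).
  apply (push_sigma_of_blue (mirror_reducing HT) v f rs);
    [now apply (reduced_stack_mirror HT)|easy].
Qed.

Lemma push_sigma_inv_top v f rs : reduced_stack v (f :: rs) ->
  exists l r, push rs (sigma_inv f) = l :: r /\
    (l = sigma_inv f \/ rev l = sigma (rev (sigma_inv f))).
Proof.
  intro W. destruct (reduced_stack_cons v f rs W) as [W' T'].
  rewrite <- (push_mirror HT v) by (rewrite ?(tail_sigma_inv HT); easy).
  apply (push_sigma_top (mirror_reducing HT) v f rs), (reduced_stack_mirror HT), W.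
Qed.

Lemma good_turn_after_red2 f a l : tail a = head f -> turn f a = 2 -> red f = true ->
  l = sigma f \/ rev l = phi (sigma f) -> bad_turnb l (rev (phi a)) = false.
Proof.
  intros T K R Hl.
  assert (E2 : sigma_iter 2 (rev (sigma f)) = rev (phi a)).
  { simpl. rewrite (rev_sigma HT), (sigma_phi HT), <- (turn2_phi HT f a T K).
    apply (sigma_rev_sigma HT). }
  pose proof (deg_ge8 HT (rev (phi a))).
  destruct Hl as [-> | Hl].
  - apply (good_turn_intro HT); rewrite (turn_of_iter_rev HT _ _ 2) by (easy || lia);
      intros; try lia.
    now rewrite (red_sigma HT), R.
  - assert (K3 : turn l (rev (phi a)) = deg (rev (phi a)) - 3).
    { apply (turn_of_iter_rev HT); [lia|].
      rewrite <- E2. simpl. rewrite Hl. unfold phi. now rewrite (sigma_sigma_inv HT). }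
    apply (good_turn_intro HT); rewrite K3; lia.
Qed.

Lemma good_turn_after_red_last2 f a l : tail a = head f -> turn f a = deg a - 2 -> red f = true ->
  l = sigma_inv f \/ rev l = sigma (rev (sigma_inv f)) -> bad_turnb l (phi (sigma_inv a)) = false.
Proof.
  intros T K R Hl.
  assert (E2 : sigma_iter 2 (phi (sigma_inv a)) = rev (sigma_inv f)).
  { simpl. rewrite (sigma_phi HT), (turn_last2_rev HT f a T K), (sigma_inv_sigma HT).
    rewrite (sigma_rev_sigma HT). unfold phi. now rewrite (rev_rev HT). }
  pose proof (deg_ge8 HT (phi (sigma_inv a))).
  destruct Hl as [-> | Hl].
  - apply (good_turn_intro HT); rewrite (turn_of_iter HT _ _ 2) by (easy || lia); intros; try lia.
    now rewrite (red_sigma_inv HT), R.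
  - assert (K3 : turn l (phi (sigma_inv a)) = 3).
    { apply (turn_of_iter HT); [lia|]. now rewrite Hl, <- E2. }
    apply (good_turn_intro HT); rewrite K3; lia.
Qed.

Lemma push_reduced_stack v rs a :
  reduced_stack v rs -> tail a = stack_end v rs -> reduced_stack v (push rs a).
Proof.
  revert a. induction rs as [|f rs IH]; intros a W T; [easy|].
  destruct (reduced_stack_cons v f rs W) as [W' T']. simpl in T.
  destruct (bad_turnb f a) eqn:B; [|now rewrite (push_good f a rs B); apply reduced_stack_extend].
  assert (Ts : tail (sigma f) = stack_end v rs) by now rewrite (tail_sigma HT).
  assert (Tsi : tail (sigma_inv f) = stack_end v rs) by now rewrite (tail_sigma_inv HT).
  apply bad_turnb_cases in B as [K|[K|[K|[[K R]|[K R]]]]].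
  - now rewrite (push_turn0 f a rs K).
  - rewrite (push_turn1 f a rs K). now apply IH.
  - rewrite (push_turn_last HT f a rs K). now apply IH.
  - rewrite (push_turn2_red HT f a rs K R).
    destruct (push_sigma_top HT v f rs W) as (l & r & El & Hl).
    pose proof (push_end HT v rs (sigma f) W' Ts) as Hend. pose proof (IH _ W' Ts) as Hw.
    rewrite El in Hend, Hw |- *. simpl in Hend.
    apply reduced_stack_extend; [easy| |now apply good_turn_after_red2 with f].
    rewrite Hend, (head_sigma HT), <- (turn2_phi HT f a T K). now rewrite (head_sigma HT a).
  - rewrite (push_turn_last2_red HT f a rs K R).
    destruct (push_sigma_inv_top v f rs W) as (l & r & El & Hl).
    pose proof (push_end HT v rs (sigma_inv f) W' Tsi) as Hend. pose proof (IH _ W' Tsi) as Hw.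
    rewrite El in Hend, Hw |- *. simpl in Hend.
    apply reduced_stack_extend; [easy| |now apply good_turn_after_red_last2 with f].
    rewrite Hend, (tail_phi HT), (turn_last2_rev HT f a T K), (sigma_inv_sigma HT), (head_sigma HT).
    unfold phi. now rewrite (rev_rev HT).
Qed.
End PushReduced.

(** * Spurs and faces are absorbed *)

Definition spur_cancels {M : surf_map} (v : V M) (rs : list (D M)) : Prop :=
  forall b, tail b = stack_end v rs -> push (push rs b) (rev b) = rs.

Definition left_face_folds {M : surf_map} (v : V M) (rs : list (D M)) : Prop :=
  forall b, tail b = stack_end v rs -> push (push rs b) (phi b) = push rs (sigma b).

Definition right_face_folds {M : surf_map} (v : V M) (rs : list (D M)) : Prop :=
  forall b, tail b = stack_end v rs -> push (push rs b) (sigma (rev b)) = push rs (sigma_inv b).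

Section FaceFolding.
Context {M : surf_map} (HT : reducing_triangulation M).
Implicit Types (d x a b f l : D M) (v : V M) (rs : list (D M)).

Lemma right_face_folds_of_mirror v rs :
  reduced_stack v rs -> @left_face_folds (mirror M) v rs -> right_face_folds v rs.
Proof.
  intros W TL b Tb. specialize (TL b Tb).
  change (push (M := mirror M) (push (M := mirror M) rs b) (sigma (rev b))
    = push (M := mirror M) rs (sigma_inv b)) in TL.
  pose proof (push_reduced_stack HT v rs b W Tb) as Wb.
  assert (Tp : tail (sigma (rev b)) = stack_end v (push rs b))
    by (rewrite (push_end HT v rs b W Tb); apply (tail_sigma HT)).
  assert (Ti : tail (sigma_inv b) = stack_end v rs) by now rewrite (tail_sigma_inv HT).
  now rewrite (push_mirror HT v rs b W Tb), (push_mirror HT v _ _ Wb Tp),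
    (push_mirror HT v rs _ W Ti) in TL.
Qed.

Lemma mirror_right_face_folds v rs :
  reduced_stack v rs -> left_face_folds v rs -> @right_face_folds (mirror M) v rs.
Proof.
  intros W TL b Tb. change (D M) in b. specialize (TL b Tb).
  change (push (M := mirror M) (push (M := mirror M) rs b) (phi b)
    = push (M := mirror M) rs (sigma b)).
  pose proof (push_reduced_stack HT v rs b W Tb) as Wb.
  assert (Tp : tail (phi b) = stack_end v (push rs b))
    by (rewrite (push_end HT v rs b W Tb); apply (tail_phi HT)).
  assert (Ts : tail (sigma b) = stack_end v rs) by now rewrite (tail_sigma HT).
  now rewrite (push_mirror HT v rs b W Tb), (push_mirror HT v _ _ Wb Tp),
    (push_mirror HT v rs _ W Ts).
Qed.

Lemma spur_cancels_turn_left v f rs a :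
  reduced_stack v (f :: rs) -> tail a = head f -> right_face_folds v rs ->
  turn f a = 1 \/ (turn f a = 2 /\ red f = true) -> push (push (f :: rs) a) (rev a) = f :: rs.
Proof.
  intros W T TR K. destruct (reduced_stack_cons v f rs W) as [_ T'].
  assert (Ts : tail (sigma f) = stack_end v rs) by now rewrite (tail_sigma HT).
  assert (Hf : push (push rs (sigma f)) (sigma (rev (sigma f))) = f :: rs)
    by (rewrite (TR _ Ts), (sigma_inv_sigma HT); apply (push_top v f rs W)).
  destruct K as [K|[K R]].
  - rewrite (push_turn1 f a rs K), (turn1_phi HT f a T K), <- (sigma_rev_sigma HT f). exact Hf.
  - rewrite (push_turn2_red HT f a rs K R), (push_turn_last HT).
    + rewrite <- (sigma_rev_sigma HT a), (sigma_inv_sigma HT), (turn2_phi HT f a T K),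
        <- (sigma_rev_sigma HT f). exact Hf.
    + apply (turn_of_iter_rev HT); [pose proof (deg_ge8 HT (rev a)); lia|].
      simpl. rewrite (rev_rev HT). apply (sigma_phi HT).
Qed.

Lemma left_face_folds_turn_last v f rs a :
  reduced_stack v (f :: rs) -> tail a = head f -> turn f a = deg a - 1 ->
  push (push (f :: rs) a) (phi a) = push (f :: rs) (sigma a).
Proof.
  intros W T K. pose proof (turn_last_rev HT f a T K) as Ea.
  assert (Tsa : tail (sigma a) = head f) by now rewrite (tail_sigma HT).
  assert (Ks : turn f (sigma a) = deg (sigma a) - 2).
  { apply (turn_of_iter_rev HT); [pose proof (deg_ge8 HT (sigma a)); lia|]. simpl. now rewrite Ea. }
  rewrite (push_turn_last HT f a rs K).
  destruct (red f) eqn:Rf.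
  - rewrite (push_turn_last2_red HT f (sigma a) rs Ks Rf), (sigma_inv_sigma HT).
    destruct (push_sigma_inv_top HT v f rs W) as (l & r & El & Hl). rewrite El.
    apply push_good. pose proof (good_turn_after_red_last2 HT f (sigma a) l Tsa Ks Rf Hl) as G.
    now rewrite (sigma_inv_sigma HT) in G.
  - rewrite (push_sigma_inv_of_blue HT v f rs W Rf).
    assert (K2 : turn (sigma_inv f) (phi a) = 2).
    { apply (turn_of_iter HT); [pose proof (deg_ge8 HT (phi a)); lia|].
      simpl. rewrite (sigma_phi HT), Ea, (sigma_rev_sigma HT).
      unfold phi. now rewrite (rev_rev HT). }
    rewrite (push_turn2_red HT _ _ rs K2) by now rewrite (red_sigma_inv HT), Rf.
    rewrite (push_good f (sigma a) rs), (rev_phi_phi HT), (sigma_sigma_inv HT), (push_top v f rs W);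
      [easy|].
    apply (good_turn_intro HT); rewrite Ks; intros; pose proof (deg_ge8 HT (sigma a)); lia || easy.
Qed.

Lemma left_face_folds_turn_last2 v f rs a :
  reduced_stack v (f :: rs) -> tail a = head f -> left_face_folds v rs ->
  turn f a = deg a - 2 -> red f = true ->
  push (push (f :: rs) a) (phi a) = push (f :: rs) (sigma a).
Proof.
  intros W T TL K R. destruct (reduced_stack_cons v f rs W) as [_ T'].
  pose proof (turn_last2_rev HT f a T K) as Ea.
  assert (K2 : turn (phi (sigma_inv a)) (phi a) = 2).
  { apply (turn_of_iter HT); [pose proof (deg_ge8 HT (phi a)); lia|].
    simpl. rewrite (sigma_phi HT), <- (sigma_rev_sigma HT (sigma_inv a)), (sigma_sigma_inv HT).
    reflexivity. }
  assert (R2 : red (phi (sigma_inv a)) = true).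
  { rewrite (red_phi HT), (red_sigma_inv HT), Ea, !(red_sigma HT), (red_rev HT), R. reflexivity. }
  assert (K3 : turn f (sigma a) = deg (sigma a) - 3).
  { apply (turn_of_iter_rev HT); [pose proof (deg_ge8 HT (sigma a)); lia|]. simpl. now rewrite Ea. }
  assert (Ti : tail (sigma_inv f) = stack_end v rs) by now rewrite (tail_sigma_inv HT).
  rewrite (push_turn_last2_red HT f a rs K R), (push_turn2_red HT _ _ _ K2 R2), (rev_phi_phi HT).
  rewrite (sigma_phi HT), Ea, (sigma_inv_sigma HT), (rev_sigma_rev HT), (TL _ Ti).
  rewrite (sigma_sigma_inv HT), (push_top v f rs W), <- Ea. symmetry. apply push_good.
  apply (good_turn_intro HT); rewrite K3; pose proof (deg_ge8 HT (sigma a)); lia.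
Qed.

Lemma left_face_folds_cons v f rs :
  reduced_stack v (f :: rs) -> spur_cancels v rs -> left_face_folds v rs ->
  left_face_folds v (f :: rs).
Proof.
  intros W C TL a T. simpl in T. destruct (reduced_stack_cons v f rs W) as [_ T'].
  assert (Ts : tail (sigma f) = stack_end v rs) by now rewrite (tail_sigma HT).
  pose proof (deg_ge8 HT (sigma a)) as H8. rewrite (deg_sigma HT) in H8.
  destruct (bad_turnb f a) eqn:B.
  2:{ rewrite (push_good f a rs B). apply push_turn1, (turn_phi HT). }
  apply bad_turnb_cases in B as [K|[K|[K|[[K R]|[K R]]]]].
  - rewrite (push_turn0 f a rs K). pose proof (turn0_rev HT f a T K). subst a.
    rewrite (push_turn_last HT).
    + unfold phi. now rewrite (rev_rev HT).
    + apply (turn_of_iter_rev HT); [rewrite (deg_sigma HT); lia|easy].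
  - rewrite (push_turn1 f a rs K). pose proof (turn1_phi HT f a T K). subst a.
    rewrite <- (rev_sigma HT), (C _ Ts).
    symmetry. apply push_turn0, (turn_of_iter HT); [rewrite (deg_sigma HT); lia|].
    apply (sigma_phi HT).
  - now apply (left_face_folds_turn_last v).
  - pose proof (turn_rev HT (rev (phi a))) as K0. rewrite (rev_rev HT) in K0.
    rewrite (push_turn2_red HT f a rs K R), (push_turn0 _ _ _ K0). symmetry.
    apply push_turn1, (turn_of_iter HT); [rewrite (deg_sigma HT); lia|].
    simpl. now rewrite (turn2_phi HT f a T K), (sigma_phi HT).
  - now apply (left_face_folds_turn_last2 v).
Qed.
End FaceFolding.

Section SpurCancellation.
Context {M : surf_map} (HT : reducing_triangulation M).
Implicit Types (a b f : D M) (v : V M) (rs : list (D M)).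

Lemma spur_cancels_turn_right v f rs a :
  reduced_stack v (f :: rs) -> tail a = head f -> left_face_folds v rs ->
  turn f a = deg a - 1 \/ (turn f a = deg a - 2 /\ red f = true) ->
  push (push (f :: rs) a) (rev a) = f :: rs.
Proof.
  intros W T TL K. pose proof (mirror_reducing HT) as HTm.
  destruct (reduced_stack_cons v f rs W) as [W' _]. pose proof (deg_ge8 HT a).
  assert (Km : @turn (mirror M) f a = 1 \/ (@turn (mirror M) f a = 2 /\ red f = true)).
  { rewrite (turn_mirror HT f a T).
    destruct K as [K|[K R]]; rewrite K.
    - left. destruct (Nat.eqb_spec (deg a - 1) 0); lia.
    - right. split; [destruct (Nat.eqb_spec (deg a - 2) 0); lia|easy]. }
  pose proof (spur_cancels_turn_left HTm v f rs a (proj2 (reduced_stack_mirror HT v _) W) T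
    (mirror_right_face_folds HT v rs W' TL) Km) as C.
  assert (Ta : tail (rev a) = stack_end v (push (f :: rs) a))
    by now rewrite (push_end HT v _ a W T).
  rewrite <- (push_mirror HT v _ _ (push_reduced_stack HT v _ a W T) Ta),
    <- (push_mirror HT v _ a W T).
  exact C.
Qed.

Lemma spur_cancels_cons v f rs :
  reduced_stack v (f :: rs) -> left_face_folds v rs -> right_face_folds v rs ->
  spur_cancels v (f :: rs).
Proof.
  intros W TL TR b T. simpl in T.
  destruct (bad_turnb f b) eqn:B.
  2:{ rewrite (push_good f b rs B). apply push_turn0, (turn_rev HT). }
  apply bad_turnb_cases in B as [K|[K|[K|[[K R]|[K R]]]]].
  - rewrite (push_turn0 f b rs K), (turn0_rev HT f b T K), (rev_rev HT). apply (push_top v f rs W).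
  - apply (spur_cancels_turn_left HT v); auto.
  - apply (spur_cancels_turn_right v); auto.
  - apply (spur_cancels_turn_left HT v); auto.
  - apply (spur_cancels_turn_right v); auto.
Qed.
End SpurCancellation.

Lemma empty_stack_invariants {M : surf_map} (HT : reducing_triangulation M) (v : V M) :
  spur_cancels v [] /\ left_face_folds v [].
Proof.
  split; intros b _.
  - apply push_turn0, (turn_rev HT).
  - change (push [b] (phi b) = [sigma b]). rewrite push_turn1 by apply (turn_phi HT). reflexivity.
Qed.

(* [M] is quantified inside the induction because [right_face_folds] is obtained from
   [left_face_folds] of the mirror. *)
Lemma stack_invariants_of_length n : forall (M : surf_map) (HT : reducing_triangulation M)
  (v : V M) (rs : list (D M)), length rs = n -> reduced_stack v rs ->
  spur_cancels v rs /\ left_face_folds v rs.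
Proof.
  induction n as [|n IH]; intros M HT v [|f rs] Hn W; try discriminate;
    [now apply empty_stack_invariants|].
  injection Hn as Hn. destruct (reduced_stack_cons v f rs W) as [W' _].
  destruct (IH M HT v rs Hn W') as [C TL].
  assert (TR : right_face_folds v rs).
  { apply (right_face_folds_of_mirror HT v rs W'), (IH (mirror M) (mirror_reducing HT) v rs Hn).
    now apply (reduced_stack_mirror HT). }
  split; [now apply (spur_cancels_cons HT v) | now apply (left_face_folds_cons HT v)].
Qed.

Lemma stack_invariants {M : surf_map} (HT : reducing_triangulation M) (v : V M) (rs : list (D M)) :
  reduced_stack v rs -> spur_cancels v rs /\ left_face_folds v rs.
Proof. exact (stack_invariants_of_length _ M HT v rs eq_refl). Qed.

(** * Normal forms *)

Definition normal_form {M : surf_map} (ds : list (D M)) : list (D M) := List.fold_left push ds [].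

Fixpoint walk_end {M : surf_map} (v : V M) (ds : list (D M)) : V M :=
  match ds with [] => v | d :: ds' => walk_end (head d) ds' end.

Lemma is_walk_app {M : surf_map} (v : V M) (l1 l2 : list (D M)) :
  is_walk M v (l1 ++ l2) <-> is_walk M v l1 /\ is_walk M (walk_end v l1) l2.
Proof. revert v. induction l1 as [|d l1 IH]; intro v; simpl; [tauto|]. rewrite IH. tauto. Qed.

Section NormalForm.
Context {M : surf_map} (HT : reducing_triangulation M).
Implicit Types (d : D M) (v : V M) (rs ds : list (D M)).

Lemma fold_push_reduced_stack v ds : forall rs,
  reduced_stack v rs -> is_walk M (stack_end v rs) ds ->
  reduced_stack v (List.fold_left push ds rs) /\
  stack_end v (List.fold_left push ds rs) = walk_end (stack_end v rs) ds.
Proof.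
  induction ds as [|d ds IH]; intros rs W Hw; [easy|].
  destruct Hw as [Td Hw]. simpl. rewrite <- (push_end HT v rs d W Td) in Hw |- *.
  apply IH; [apply (push_reduced_stack HT)|]; easy.
Qed.

Lemma normal_form_reduced_stack v ds :
  is_walk M v ds ->
  reduced_stack v (normal_form ds) /\ stack_end v (normal_form ds) = walk_end v ds.
Proof. intro Hw. now apply (fold_push_reduced_stack v ds []). Qed.

(* A face [d; phi d; phi (phi d)] first folds to [sigma d], which then cancels against
   [phi (phi d) = rev (sigma d)]. *)
Lemma elem_move_normal_form p q : elem_move M p q -> normal_form (snd p) = normal_form (snd q).
Proof.
  intros [v l1 l2 d Hw _ | v l1 l2 d _ Hw]; simpl; unfold normal_form; rewrite !List.fold_left_app;
    change (List.fold_left push l1 []) with (normal_form l1);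
    apply is_walk_app in Hw as [H1 [Td _]];
    destruct (normal_form_reduced_stack v l1 H1) as [W E];
    destruct (stack_invariants HT v _ W) as [C TL]; rewrite <- E in Td; simpl; f_equal.
  - now apply C.
  - rewrite (TL _ Td), <- (rev_sigma HT). symmetry. apply C. now rewrite (tail_sigma HT).
Qed.

Lemma homotopic_normal_form p q : homotopic M p q -> normal_form (snd p) = normal_form (snd q).
Proof.
  induction 1 as [p q Hm | p | p q _ IH | p q r _ IH1 _ IH2];
    [now apply elem_move_normal_form | easy | easy | congruence].
Qed.

Lemma fold_push_reduced f ds rs : is_walk M (head f) ds -> reduced M (f :: ds) ->
  List.fold_left push ds (f :: rs) = List.rev ds ++ f :: rs.
Proof.
  revert f rs. induction ds as [|d ds IH]; intros f rs Hw Hr; [easy|].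
  destruct Hw as [Td Hw], Hr as [Nb Hr]. cbn [List.fold_left]. rewrite push_good.
  - rewrite IH by easy. simpl. now rewrite <- List.app_assoc.
  - destruct (bad_turnb f d) eqn:B; [|easy]. exfalso. now apply Nb, (bad_turnb_sound HT).
Qed.

Lemma normal_form_reduced v ds : is_walk M v ds -> reduced M ds -> normal_form ds = List.rev ds.
Proof. destruct ds as [|d ds]; [easy|]. intros [_ Hw] Hr. now apply fold_push_reduced. Qed.
End NormalForm.

Theorem proposition3p2 (M : surf_map)
  (HT : reducing_triangulation M) (HC : compact_or_lift M)
  (v : V M) (ds1 ds2 : list (D M)) :
  is_walk M v ds1 -> is_walk M v ds2 ->
  reduced M ds1 -> reduced M ds2 ->
  homotopic M (v, ds1) (v, ds2) ->
  ds1 = ds2.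
Proof.
  intros H1 H2 R1 R2 Hh.
  apply (homotopic_normal_form HT) in Hh. simpl in Hh.
  rewrite (normal_form_reduced HT v ds1 H1 R1), (normal_form_reduced HT v ds2 H2 R2) in Hh.
  now rewrite <- (List.rev_involutive ds1), Hh, List.rev_involutive.
Qed.
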